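(* Let $K\subseteq\mathbb{C}$ be a number field of class number $1$ stable under complex conjugation, with ring of integers $\mathcal{O}_K$, and let $K_0:=K\cap\mathbb{R}$, $\mathcal{O}_{K_0}:=K_0\cap\mathcal{O}_K$. Suppose $a,b\in\mathcal{O}_{K_0}$ satisfy $a\mid b$ and $a=\alpha\overline{\alpha}$, $b=\beta\overline{\beta}$ for some $\alpha,\beta\in\mathcal{O}_K$. Then there exists $\alpha_1\in\mathcal{O}_K$ dividing $\beta$ such that $\alpha_1\overline{\alpha_1}=\alpha\overline{\alpha}$. In particular $b/a=\gamma\overline{\gamma}$ with $\gamma=\beta/\alpha_1\in\mathcal{O}_K$. *)

From mathcomp Require Import all_boot all_order all_algebra all_field.
Set Implicit Arguments. Unset Strict Implicit. Unset Printing Implicit Defensive.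
Import Order.TTheory GRing.Theory Num.Theory.
Local Open Scope ring_scope.

(* The number field K = Q(theta) inside algC (every number field K ⊆ C is of this form,
   by the primitive element theorem, and lies in the algebraic numbers algC). *)
Definition in_numfield (theta x : algC) : Prop :=
  exists p : {poly rat}, x = (map_poly ratr p).[theta].

Definition in_OK (theta x : algC) : Prop := in_numfield theta x /\ x \in Aint.

Definition in_OK0 (theta x : algC) : Prop := in_OK theta x /\ x \is Num.real.

Definition conj_stable (theta : algC) : Prop :=
  forall x, in_numfield theta x -> in_numfield theta x^*.

Definition is_ideal (O I : algC -> Prop) : Prop :=
  [/\ (forall x, I x -> O x), I 0,
      (forall x y, I x -> I y -> I (x + y)) &
      (forall r x, O r -> I x -> I (r * x))].

Definition class_number_one (theta : algC) : Prop :=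
  forall I : algC -> Prop, is_ideal (in_OK theta) I ->
    exists g, in_OK theta g /\
      (forall x, I x <-> exists r, in_OK theta r /\ x = g * r).

From mathcomp Require Import all_boot all_order all_algebra all_field.
From mathcomp Require Import ring.
Set Implicit Arguments. Unset Strict Implicit. Unset Printing Implicit Defensive.
Import Order.TTheory GRing.Theory Num.Theory.
Local Open Scope ring_scope.

(* Write alpha = g al and beta = g be with g a generator of the ideal (alpha, beta), so
   that al and be are coprime: u al + v be = 1.  Dividing a | b by g g^* gives
   al al^* c = be be^*, hence al divides be^* (Gauss), i.e. be^* = al d.  Conjugating,
   beta = alpha1 d^* with alpha1 = g al^*, which has the same norm as alpha = g al. *)

Section RingOfIntegers.

Variable theta : algC.

Lemma in_OK_0 : in_OK theta 0.
Proof. split; last exact: Aint0. by exists 0; rewrite map_poly0 horner0. Qed.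

Lemma in_OK_1 : in_OK theta 1.
Proof. split; last exact: Aint1. by exists 1; rewrite rmorph1 hornerC. Qed.

Lemma in_OKD x y : in_OK theta x -> in_OK theta y -> in_OK theta (x + y).
Proof.
move=> [[p ->] hx] [[q ->] hy]; split; last exact: rpredD.
by exists (p + q); rewrite rmorphD hornerD.
Qed.

Lemma in_OKM x y : in_OK theta x -> in_OK theta y -> in_OK theta (x * y).
Proof.
move=> [[p ->] hx] [[q ->] hy]; split; last exact: rpredM.
by exists (p * q); rewrite rmorphM hornerM.
Qed.

Lemma in_OK_conj x : conj_stable theta -> in_OK theta x -> in_OK theta x^*.
Proof. by move=> hc [hx hi]; split; [exact: hc | rewrite (Aint_aut Num.conj)]. Qed.

Definition ideal2 (x y : algC) (z : algC) : Prop :=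
  exists r s, [/\ in_OK theta r, in_OK theta s & z = r * x + s * y].

Lemma is_ideal_ideal2 x y :
  in_OK theta x -> in_OK theta y -> is_ideal (in_OK theta) (ideal2 x y).
Proof.
move=> hx hy; split.
- by move=> z [r [s [hr hs ->]]]; apply: in_OKD; apply: in_OKM.
- by exists 0, 0; rewrite !mul0r addr0; split=> //; exact: in_OK_0.
- move=> z z' [r [s [hr hs ->]]] [r' [s' [hr' hs' ->]]].
  by exists (r + r'), (s + s'); rewrite !mulrDl addrACA; split=> //; exact: in_OKD.
- move=> t z ht [r [s [hr hs ->]]].
  by exists (t * r), (t * s); rewrite mulrDr !mulrA; split=> //; exact: in_OKM.
Qed.

Lemma in_OK_bezout x y :
  class_number_one theta -> in_OK theta x -> in_OK theta y ->
  exists g x' y' u v,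
    [/\ [/\ in_OK theta g, in_OK theta x', in_OK theta y', in_OK theta u
          & in_OK theta v],
        x = g * x', y = g * y' & g = u * x + v * y].
Proof.
move=> hcl hx hy; have [g [hg hgI]] := hcl _ (is_ideal_ideal2 hx hy).
have [u [v [hu hv gE]]] : ideal2 x y g.
  by apply/hgI; exists 1; rewrite mulr1; split=> //; exact: in_OK_1.
have [x' [hx' xE]] : exists r, in_OK theta r /\ x = g * r.
  apply/hgI; exists 1, 0; rewrite mul1r mul0r addr0.
  by split; [exact: in_OK_1 | exact: in_OK_0 |].
have [y' [hy' yE]] : exists r, in_OK theta r /\ y = g * r.
  apply/hgI; exists 0, 1; rewrite mul1r mul0r add0r.
  by split; [exact: in_OK_0 | exact: in_OK_1 |].
by exists g, x', y', u, v.
Qed.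

End RingOfIntegers.

Lemma conjCM (x y : algC) : (x * y)^* = x^* * y^*.
Proof. exact: rmorphM. Qed.

(* Euclid's lemma, with the quotient made explicit. *)
Lemma bezout_dvd_mull (R : comPzRingType) (al be be' e u v : R) :
  u * al + v * be = 1 -> al * e = be * be' -> be' = al * (u * be' + v * e).
Proof.
move=> bez dvd; rewrite mulrDr mulrA [al * (v * e)]mulrCA dvd.
by rewrite -[LHS]mul1r -bez; ring.
Qed.

Theorem mainTheorem3 (theta : algC)
  (hconj : conj_stable theta) (hcl : class_number_one theta)
  (a b alpha beta : algC)
  (ha : in_OK0 theta a) (hb : in_OK0 theta b)
  (hab : exists c, in_OK0 theta c /\ b = a * c)
  (halpha : in_OK theta alpha) (hbeta : in_OK theta beta)
  (hanorm : a = alpha * alpha^*) (hbnorm : b = beta * beta^*) :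
  exists alpha1 gamma : algC,
    [/\ in_OK theta alpha1, in_OK theta gamma, beta = alpha1 * gamma,
        alpha1 * alpha1^* = alpha * alpha^* & b = a * (gamma * gamma^*)].
Proof.
have [c [[hc _] bE]] := hab.
have [g [al [be [u [v [[hg hal hbe hu hv] alE beE gE]]]]]] :=
  in_OK_bezout hcl halpha hbeta.
have [g0|gn0] := eqVneq g 0.
  exists 0, 0; rewrite hbnorm beE alE g0 !mul0r ?rmorph0 ?mulr0.
  by split=> //; exact: in_OK_0.
have bez : u * al + v * be = 1.
  by apply: (mulfI gn0); rewrite mulr1 {2}gE alE beE; ring.
have ggn0 : g * g^* != 0 by rewrite mulf_neq0 // conjC_eq0.
have normE : al * (al^* * c) = be * be^*.
  apply: (mulfI ggn0); transitivity (a * c).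
    by rewrite hanorm alE conjCM; ring.
  by rewrite -bE hbnorm beE conjCM; ring.
pose d := u * be^* + v * (al^* * c).
have beC : be = al^* * d^* by rewrite -[be]conjCK (bezout_dvd_mull bez normE) conjCM.
exists (g * al^*), d^*; split.
- by apply: in_OKM => //; exact: in_OK_conj.
- by apply: in_OK_conj => //; apply: in_OKD; apply: in_OKM => //;
    [exact: in_OK_conj | apply: in_OKM => //; exact: in_OK_conj].
- by rewrite beE beC mulrA.
- by rewrite alE !conjCM conjCK; ring.
- by rewrite hbnorm hanorm beE alE beC !conjCM !conjCK; ring.
Qed.
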